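(* There is no injective algebra homomorphism from $\mathbb{C}[[X_1,X_2,\dots]]$ into $\mathbb{C}[[X]]$; in particular, there is no topological (i.e. continuous, injective, homeomorphic-onto-image) algebra embedding of $\mathbb{C}[[X_1,X_2,\dots]]$ into $\mathbb{C}[[X]]$.
   Context: $\mathbb{C}[[X_1,X_2,\dots]]$ denotes the algebra of all formal power series in countably many commuting indeterminates $X_1,X_2,\dots$ with complex coefficients, i.e. formal sums $\sum_{r}\lambda_r X^r$ over finitely supported multi-indices $r=(r_1,r_2,\dots)\in(\mathbb{Z}^+)^{(\mathbb{N})}$, $X^r=\prod_i X_i^{r_i}$. It is a Fréchet algebra under the topology of coordinatewise convergence (defined by the coefficient projections). $\mathbb{C}[[X]]$ is the algebra of formal power series in one indeterminate, with the topology of coordinatewise convergence. *)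

(* C is modelled as R[i] for an arbitrary R : realType
   (any realType is a complete archimedean ordered field, hence R[i] ≅ ℂ). *)
From mathcomp Require Import all_boot all_order all_algebra.
From mathcomp Require Import reals.
From mathcomp Require Import complex.
Set Implicit Arguments. Unset Strict Implicit. Unset Printing Implicit Defensive.
Import GRing.Theory.
Local Open Scope ring_scope.

(* Finitely supported multi-indices r = (r_1, r_2, ...) in (Z^+)^(N),
   represented canonically as the list [r_1; ...; r_k] with no trailing zeros
   (last entry nonzero; the empty list is the zero multi-index). *)
Definition midx_canon (s : seq nat) : bool := (last 1%N s != 0%N).
Definition midx := {s : seq nat | midx_canon s}.
Definition midx0 : midx := exist _ [::] (erefl true).

Definition mnorm (s : seq nat) : seq nat :=
  rev (drop (find (fun x => x != 0%N) (rev s)) (rev s)).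
Definition mk (s : seq nat) : midx := insubd midx0 (mnorm s).

Fixpoint box (r : seq nat) : seq (seq nat) :=
  match r with
  | [::] => [:: [::]]
  | x :: r' => [seq y :: s | y <- iota 0 x.+1, s <- box r']
  end.
Definition msub (r s : seq nat) : seq nat := [seq (p.1 - p.2)%N | p <- zip r s].

Section Series.
Variable C : comRingType.

(* C[[X_1, X_2, ...]] : coefficient families indexed by multi-indices *)
Definition mser := midx -> C.
Definition madd (F G : mser) : mser := fun r => F r + G r.
Definition mscale (c : C) (F : mser) : mser := fun r => c * F r.
Definition mmul (F G : mser) : mser :=
  fun r => \sum_(s <- box (val r)) F (mk s) * G (mk (msub (val r) s)).

Definition ser := nat -> C.
Definition sadd (f g : ser) : ser := fun n => f n + g n.
Definition sscale (c : C) (f : ser) : ser := fun n => c * f n.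
Definition smul (f g : ser) : ser :=
  fun n => \sum_(i < n.+1) f i * g (n - i)%N.

Definition is_alg_hom (phi : mser -> ser) : Prop :=
  [/\ forall F G, phi (madd F G) = sadd (phi F) (phi G),
      forall c F, phi (mscale c F) = sscale c (phi F) &
      forall F G, phi (mmul F G) = smul (phi F) (phi G)].
End Series.

From mathcomp Require Import all_boot all_order all_algebra.
From mathcomp Require Import reals complex.
From mathcomp Require Import boolp zify.
Set Implicit Arguments. Unset Strict Implicit. Unset Printing Implicit Defensive.
Import GRing.Theory.
Local Open Scope ring_scope.

(* The constant term of phi is a
   character of C[[X_1, X_2, ...]]; it kills X_1 - c for c = phi(X_1)(0), and
   X_1 - c is invertible unless c = 0, so phi(X_1) has some order a > 0 and
   phi(X_1^i) has order i a. For each residue rho mod a choose K_rho whose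
   image has the least order e_rho = rho (mod a) among all images. Every order
   m of an image is then the order of the image of X_1^i K_(m mod a), with
   i = (m - e_rho) / a, so the coefficients of phi(H) can be cancelled one at a
   time. The successive remainders converge X_1-adically; the limit differs
   from the n-th remainder by a multiple of X_1^T, so its image vanishes below
   min(n, T a) for all n, T. By injectivity the limit is 0, so H is a
   C[[X_1]]-combination of K_0, ..., K_(a-1). Modulo X_1 this puts the a + 1
   variables X_2, ..., X_(a+2) in an a-dimensional space. *)

Lemma mnorm_cons x s : mnorm (x :: s) =
  if (x == 0)%N && (mnorm s == [::]) then [::] else x :: mnorm s.
Proof.
rewrite /mnorm rev_cons -cats1 find_cat.
set p := (fun x : nat => x != 0%N).
case: ifP => hp.
- rewrite drop_cat ifT; last by rewrite -has_find.
  rewrite rev_cat /=.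
  have -> : (rev (drop (find p (rev s)) (rev s)) == [::]) = false.
    apply/negbTE; rewrite -size_eq0 size_rev size_drop subn_eq0 -ltnNge -has_find //.
  by rewrite andbF.
- have -> : drop (find p (rev s)) (rev s) = [::].
    by apply/eqP; rewrite -size_eq0 size_drop hasNfind ?hp // subnn.
  rewrite drop_cat ltnNge leq_addr /= addKn.
  by rewrite /p; case: (x =P 0%N) => [->|/eqP nx] //=; rewrite (negbTE nx).
Qed.

Lemma mnorm_nilP s : (mnorm s == [::]) = all (eq_op^~ 0%N) s.
Proof.
elim: s => [//|x s IH]; rewrite mnorm_cons /=.
by case: (x =P 0%N) => [->|] /=; first by rewrite -IH; case: ifP.
Qed.

Lemma mnorm_canon s : midx_canon (mnorm s).
Proof.
rewrite /midx_canon; elim: s => [//|x s IH]; rewrite mnorm_cons.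
case: ifP => //= h.
case E: (mnorm s) => [|y t] /=; last by move: IH; rewrite E.
by move: h; rewrite E eqxx andbT => /negbT.
Qed.

Lemma val_mk s : val (mk s) = mnorm s.
Proof. by rewrite /mk val_insubd mnorm_canon. Qed.

Lemma mnorm_id s : midx_canon s -> mnorm s = s.
Proof.
rewrite /midx_canon; elim: s => [//|x s IH] /= h.
rewrite mnorm_cons.
case: s IH h => [|y t] IH h; first by rewrite /= in h; rewrite (negbTE h).
by rewrite IH // andbF.
Qed.

Lemma mk_val r : mk (val r) = r.
Proof. by apply: val_inj; rewrite val_mk mnorm_id //; apply: valP. Qed.

Lemma mnorm_behead (r : midx) : mnorm (behead (val r)) = behead (val r).
Proof. by apply: mnorm_id; case: r => [[|x [|y t]]]. Qed.

Definition mhead (r : midx) : nat := head 0%N (val r).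

Lemma mhead_mk y s : mhead (mk (y :: s)) = y.
Proof. by rewrite /mhead val_mk mnorm_cons; case: ifP => //= /andP [/eqP ->]. Qed.

Lemma behead_mk y s : behead (val (mk (y :: s))) = mnorm s.
Proof. by rewrite val_mk mnorm_cons; case: ifP => //= /andP [_ /eqP ->]. Qed.

Lemma mk_mhead_behead (r : midx) : mk (mhead r :: behead (val r)) = r.
Proof.
case: r => [[|x s] h]; first by apply: val_inj; rewrite val_mk.
by rewrite -[x :: s]/(val (exist _ (x :: s) h)) mk_val.
Qed.

Lemma midx_eqE (r r' : midx) :
  (r == r') = (mhead r == mhead r') && (behead (val r) == behead (val r')).
Proof.
apply/eqP/andP => [-> //|[/eqP h /eqP t]].
by rewrite -(mk_mhead_behead r) -(mk_mhead_behead r') h t.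
Qed.

(* the exponent of the variable X_(l+2) *)
Definition midx_var (l : nat) : midx := mk (nseq l.+1 0%N ++ [:: 1%N]).

Lemma val_midx_var l : val (midx_var l) = nseq l.+1 0%N ++ [:: 1%N].
Proof. by rewrite val_mk mnorm_id // /midx_canon last_cat. Qed.

Lemma mhead_midx_var l : mhead (midx_var l) = 0%N.
Proof. by rewrite /mhead val_midx_var. Qed.

Lemma midx_var_inj : injective midx_var.
Proof.
move=> l l' /(congr1 (size \o val)); rewrite /= !val_midx_var !size_cat !size_nseq.
by move/addIn => [].
Qed.

Lemma msub_nseq0 s : msub s (nseq (size s) 0%N) = s.
Proof. by rewrite /msub; elim: s => //= x s ->; rewrite subn0. Qed.

Section Monomials.
Variable C : comNzRingType.

Definition X1pow (T : nat) : mser C := fun r => if r == mk [:: T] then 1 else 0.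

Lemma X1pow_mk T y s :
  X1pow T (mk (y :: s)) = if (y == T) && all (eq_op^~ 0%N) s then 1 else 0.
Proof. by rewrite /X1pow midx_eqE !mhead_mk !behead_mk mnorm_nilP. Qed.

Lemma sum_box_zero s (F : seq nat -> C) :
  \sum_(t <- box s) (if all (eq_op^~ 0%N) t then F t else 0) = F (nseq (size s) 0%N).
Proof.
elim: s F => [|x s IH] F; first by rewrite /= big_seq1.
rewrite /= big_cat big_map big_allpairs_dep /= (IH (fun t => F (0%N :: t))).
rewrite big1_seq ?addr0 // => y /andP [_]; rewrite mem_iota => /andP [y0 _].
by apply: big1 => t _; rewrite -(prednK y0).
Qed.

Lemma mmul_X1pow T (Q : mser C) r : mmul (X1pow T) Q r =
  if (T <= mhead r)%N then Q (mk ((mhead r - T)%N :: behead (val r))) else 0.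
Proof.
case: r => [[|x s] h]; rewrite /mmul /mhead.
  rewrite /= big_seq1 -[[::]]/(mnorm [:: 0%N]) -val_mk mk_val X1pow_mk /= andbT.
  case: (T =P 0%N) => [->|/eqP nT]; last by rewrite eq_sym (negbTE nT) mul0r; case: T nT.
  by rewrite mul1r; congr Q; apply: val_inj; rewrite !val_mk.
change (val _) with (x :: s); rewrite big_allpairs_dep.
pose c := \sum_(t <- box s) (if all (eq_op^~ 0%N) t then Q (mk ((x - T)%N :: msub s t)) else 0).
rewrite (eq_bigr (fun y => if y == T then c else 0)); last first.
  move=> y _; case: (y =P T) => [->|/eqP nyT].
    by apply: eq_bigr => t _; rewrite X1pow_mk eqxx; case: all; rewrite ?mul1r ?mul0r.
  by apply: big1 => t _; rewrite X1pow_mk (negbTE nyT) mul0r.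
rewrite -big_mkcond -big_filter /c sum_box_zero msub_nseq0.
case: (leqP T x) => hT.
  by rewrite filter_pred1_uniq ?iota_uniq ?mem_iota ?ltnS // big_seq1.
rewrite -[filter _ _]/(filter (pred1 T) _) (eq_in_filter (a2 := pred0)) ?filter_pred0 ?big_nil //.
move=> y; rewrite mem_iota /= => hy; apply/eqP => e; move: hy; rewrite e; lia.
Qed.

Lemma mmul1l (Q : mser C) : mmul (X1pow 0) Q = Q.
Proof. by apply: funext => r; rewrite mmul_X1pow subn0 mk_mhead_behead. Qed.

Lemma X1powS i : X1pow i.+1 = mmul (X1pow 1) (X1pow i).
Proof.
apply: funext => r; rewrite mmul_X1pow X1pow_mk -mnorm_nilP mnorm_behead.
rewrite /X1pow midx_eqE mhead_mk behead_mk.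
by case: (mhead r) => [|h] //=; rewrite subn1.
Qed.

Lemma X1pow_dvd T (F : mser C) : (forall r, (mhead r < T)%N -> F r = 0) ->
  F = mmul (X1pow T) (fun r => F (mk ((mhead r + T)%N :: behead (val r)))).
Proof.
move=> FT; apply: funext => r; rewrite mmul_X1pow; case: leqP => [leTr|/FT //].
by rewrite mhead_mk behead_mk mnorm_behead subnK // mk_mhead_behead.
Qed.

End Monomials.

Lemma X1_subC_invertible (C : fieldType) (lam : C) : lam != 0 ->
  exists U, madd (mmul (X1pow C 1) U) (mscale (- lam) U) = X1pow C 0.
Proof.
move=> lam0; pose q n := - lam^-1 ^+ n.+1.
exists (fun r => if behead (val r) == [::] then q (mhead r) else 0).
apply: funext => r; rewrite /madd /mscale mmul_X1pow mhead_mk behead_mk.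
rewrite mnorm_behead /X1pow midx_eqE mhead_mk behead_mk /=.
case: eqP => _; last by rewrite andbF; case: ifP; rewrite mulr0 addr0.
rewrite andbT /q; case: (mhead r) => [|h] /=.
  by rewrite add0r expr1 mulrNN divff.
by rewrite subn1 /= [in X in _ + X]exprS mulrNN mulrA divff // mul1r addNr.
Qed.

Section SeriesOrder.
Variable C : idomainType.

Definition vanishes_below (f : ser C) n := forall j, (j < n)%N -> f j = 0.
Definition has_order (f : ser C) n := vanishes_below f n /\ f n != 0.

Lemma smul_coef0 (f h : ser C) : smul f h 0%N = f 0%N * h 0%N.
Proof. by rewrite /smul big_ord1. Qed.

Lemma smul_vanishes_below (f h : ser C) n m :
  vanishes_below f n -> vanishes_below h m -> vanishes_below (smul f h) (n + m).
Proof.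
move=> fn hm j jnm; apply: big1 => i _.
have [iltn|nlei] := ltnP i n; first by rewrite fn ?mul0r.
by rewrite hm ?mulr0 //; have := ltn_ord i; lia.
Qed.

Lemma smul_coef_add (f h : ser C) n m : vanishes_below f n -> vanishes_below h m ->
  smul f h (n + m)%N = f n * h m.
Proof.
move=> fn hm; rewrite /smul (bigD1 (Ordinal (leq_addr m n.+1 : (n < (n + m).+1)%N))) //=.
rewrite addKn big1 ?addr0 // => i /eqP ni.
have [iltn|nlei] := ltnP i n; first by rewrite fn ?mul0r.
have ineqn : nat_of_ord i != n by apply/eqP => e; apply: ni; apply: val_inj.
by rewrite hm ?mulr0 //; have := ltn_ord i; lia.
Qed.

Lemma has_orderM (f h : ser C) n m :
  has_order f n -> has_order h m -> has_order (smul f h) (n + m).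
Proof.
move=> [fn fn0] [hm hm0]; split; first exact: smul_vanishes_below.
by rewrite smul_coef_add // mulf_neq0.
Qed.

Lemma idem_ser_eq0 (e : ser C) : smul e e = e -> e 0%N = 0 -> forall n, e n = 0.
Proof.
move=> ee e0 n; suff: vanishes_below e n.+1 by apply.
elim: n => [|n IH]; first by case.
by move=> j jn; rewrite -ee; apply: (smul_vanishes_below IH IH); lia.
Qed.

End SeriesOrder.

Section Embedding.
Variable C : fieldType.
Variable phi : mser C -> ser C.
Hypothesis phiD : forall F G, phi (madd F G) = sadd (phi F) (phi G).
Hypothesis phiZ : forall c F, phi (mscale c F) = sscale c (phi F).
Hypothesis phiM : forall F G, phi (mmul F G) = smul (phi F) (phi G).
Hypothesis phi_inj : injective phi.

Local Notation X1 := (X1pow C 1).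
Local Notation one := (X1pow C 0).

Lemma phi0 : phi (fun _ => 0) = fun _ => 0.
Proof.
have -> : (fun _ => 0) = mscale 0 (fun _ : midx => 0 : C).
  by apply: funext => r; rewrite /mscale mul0r.
by rewrite phiZ; apply: funext => n; rewrite /sscale mul0r.
Qed.

Lemma phi_one_coef0 : phi one 0%N = 1.
Proof.
have idem : smul (phi one) (phi one) = phi one by rewrite -phiM mmul1l.
have [e0|e0] := eqVneq (phi one 0%N) 0.
  have : phi one = phi (fun _ => 0) by rewrite phi0; apply: funext; apply: idem_ser_eq0.
  move/phi_inj/(congr1 (fun F => F (mk [:: 0%N]))).
  by rewrite /X1pow eqxx => /eqP; rewrite oner_eq0.
by apply: (mulIf e0); rewrite mul1r -smul_coef0 idem.
Qed.

Lemma phi_X1_coef0 : phi X1 0%N = 0.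
Proof.
apply/eqP/negP => /negP lam0; have [U XU] := X1_subC_invertible lam0.
have := congr1 (fun F => phi F 0%N) XU.
rewrite /= phiD phiZ phiM /sadd /sscale smul_coef0 phi_one_coef0 mulNr addrN.
by move/eqP; rewrite eq_sym oner_eq0.
Qed.

Lemma phi_X1pow_order a i : has_order (phi X1) a -> has_order (phi (X1pow C i)) (i * a).
Proof.
move=> X1a; elim: i => [|i IH]; first by split; rewrite // phi_one_coef0 oner_eq0.
by rewrite X1powS phiM mulSn; apply: has_orderM.
Qed.

Lemma phi_X1_order : exists2 a, (0 < a)%N & has_order (phi X1) a.
Proof.
have X1_neq0 : exists n, phi X1 n != 0.
  apply: contrapT => X10; have : phi X1 = phi (fun _ => 0).
    by rewrite phi0; apply: funext => n; apply/eqP/(contra_notT _ X10) => Xn; exists n.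
  move/phi_inj/(congr1 (fun F => F (mk [:: 1%N]))).
  by rewrite /X1pow eqxx => /eqP; rewrite oner_eq0.
case: (ex_minnP X1_neq0) => a Xa amin.
exists a; last by split=> // j ja; apply/eqP/negP => /negP /amin; rewrite leqNgt ja.
by rewrite lt0n; apply: contraNneq Xa => ->; rewrite phi_X1_coef0.
Qed.

Lemma min_order_reps a : exists (K : nat -> mser C) (e : nat -> nat),
  forall F m, has_order (phi F) m -> [/\ has_order (phi (K (m %% a)%N)) (e (m %% a)%N),
    e (m %% a)%N = m %[mod a] & (e (m %% a) <= m)%N].
Proof.
have rep rho : exists p : mser C * nat, forall F m, has_order (phi F) m -> (m %% a)%N = rho ->
    [/\ has_order (phi p.1) p.2, (p.2 %% a)%N = rho & (p.2 <= m)%N].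
  pose attained m := `[< exists F, has_order (phi F) m /\ (m %% a)%N = rho >].
  have [ex_att|no_att] := pselect (exists m, attained m).
    case: (ex_minnP ex_att) => m0 /asboolP [F0 [F0m0 m0a]] m0min.
    by exists (F0, m0) => F m Fm ma; split=> //; apply: m0min; apply/asboolP; exists F.
  exists ((fun _ => 0), 0%N) => F m Fm ma; exfalso.
  by apply: no_att; exists m; apply/asboolP; exists F.
have [f frep] := choice rep.
exists (fun rho => (f rho).1), (fun rho => (f rho).2) => F m Fm.
by have [] := frep _ F m Fm erefl; split=> //; rewrite modn_mod.
Qed.

Section Reduction.
Variables (a : nat) (K : nat -> mser C) (e : nat -> nat).
Hypothesis a_gt0 : (0 < a)%N.
Hypothesis X1_order : has_order (phi X1) a.
Hypothesis K_min : forall F m, has_order (phi F) m ->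
  [/\ has_order (phi (K (m %% a)%N)) (e (m %% a)%N), e (m %% a)%N = m %[mod a]
    & (e (m %% a) <= m)%N].

Lemma phi_X1pow_dvd T F : (forall r, (mhead r < T)%N -> F r = 0) ->
  vanishes_below (phi F) (T * a).
Proof.
move=> /X1pow_dvd ->; rewrite phiM -[(T * a)%N]addn0.
by apply: smul_vanishes_below => //; case: (phi_X1pow_order T X1_order).
Qed.

Definition pivot_exp m := ((m - e (m %% a)) %/ a)%N.
Definition pivot m := mmul (X1pow C (pivot_exp m)) (K (m %% a)%N).

Lemma pivot_order F m : has_order (phi F) m -> has_order (phi (pivot m)) m.
Proof.
move=> Fm; have [Km em elem] := K_min Fm.
have mE : (pivot_exp m * a + e (m %% a))%N = m.
  by rewrite /pivot_exp divnK ?subnK // -eqn_mod_dvd // em.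
rewrite -[X in has_order _ X]mE /pivot phiM.
by apply: has_orderM => //; apply: phi_X1pow_order.
Qed.

Fixpoint residual (H : mser C) n : mser C :=
  if n is n'.+1 then
    let D := residual H n' in madd D (mscale (- (phi D n' / phi (pivot n') n')) (pivot n'))
  else H.

Definition greedy_coef H n := phi (residual H n) n / phi (pivot n) n.

Lemma residualS H n :
  residual H n.+1 = madd (residual H n) (mscale (- greedy_coef H n) (pivot n)).
Proof. by []. Qed.

Lemma residual_vanishes H n : vanishes_below (phi (residual H n)) n.
Proof.
elim: n => [|n IH]; first by [].
rewrite residualS phiD phiZ /sadd /sscale.
have [Dn0|Dn0] := eqVneq (phi (residual H n) n) 0.
  rewrite /greedy_coef Dn0 mul0r oppr0 => j.
  by rewrite ltnS leq_eqVlt mul0r addr0 => /predU1P [->|/IH].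
have [tn tn0] := pivot_order (conj IH Dn0).
move=> j; rewrite ltnS leq_eqVlt => /predU1P [->|jn]; last by rewrite IH // tn // mulr0 addr0.
by rewrite /greedy_coef mulNr divfK // addrN.
Qed.

Lemma residual_sum H n r :
  residual H n r = H r - \sum_(m < n) greedy_coef H m * pivot m r.
Proof.
elim: n => [|n IH]; first by rewrite big_ord0 subr0.
by rewrite residualS /madd /mscale IH big_ord_recr /= mulNr opprD addrA.
Qed.

Definition emax := (\max_(rho < a) e rho)%N.

Lemma pivot_far m r : (emax + a * (mhead r).+1 <= m)%N -> pivot m r = 0.
Proof.
move=> far; rewrite /pivot mmul_X1pow ifF //; apply/negbTE; rewrite -ltnNge.
have e_le : (e (m %% a) <= emax)%N.
  exact: (leq_bigmax (F := fun rho : 'I_a => e rho) (Ordinal (ltn_pmod m a_gt0))).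
have : (a * (mhead r).+1 <= m - e (m %% a))%N by lia.
by move/(leq_div2r a); rewrite mulKn.
Qed.

Lemma residual_stable H r n n' : (emax + a * (mhead r).+1 <= n <= n')%N ->
  residual H n' r = residual H n r.
Proof.
case/andP=> far /subnKC <-; elim: (n' - n)%N => [|k IH]; first by rewrite addn0.
by rewrite addnS residualS /madd /mscale IH pivot_far ?mulr0 ?addr0 // (leq_trans far) ?leq_addr.
Qed.

Definition residual_lim H : mser C := fun r => residual H (emax + a * (mhead r).+1)%N r.

Lemma residual_lim_eq0 H : residual_lim H = fun _ => 0.
Proof.
apply: phi_inj; rewrite phi0; apply: funext => j.
pose n := (emax + a * j.+1)%N.
have lim_n r : (mhead r < j.+1)%N -> madd (residual_lim H) (mscale (-1) (residual H n)) r = 0.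
  move=> rj; rewrite /madd /mscale /residual_lim.
  rewrite (@residual_stable H r (emax + a * (mhead r).+1)%N n) ?mulN1r ?addrN //.
  by rewrite leqnn /n leq_add2l leq_mul2l rj orbT.
have ja : (j < j.+1 * a)%N := leq_pmulr _ a_gt0.
have jn : (j < n)%N by rewrite /n; lia.
have := phi_X1pow_dvd lim_n ja.
by rewrite phiD phiZ /sadd /sscale residual_vanishes // mulr0 addr0.
Qed.

Lemma greedy_expansion H r :
  H r = \sum_(m < emax + a * (mhead r).+1) greedy_coef H m * pivot m r.
Proof.
apply/eqP; rewrite -subr_eq0 -residual_sum.
by rewrite -[residual _ _ _]/(residual_lim H r) residual_lim_eq0.
Qed.

Definition coord_mod_X1 H (rho : 'I_a) : C :=
  \sum_(m < emax + a | ((m %% a)%N == rho) && (pivot_exp m == 0%N)) greedy_coef H m.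

Lemma pivot_mod_X1 m r : mhead r = 0%N ->
  pivot m r = if pivot_exp m == 0%N then K (m %% a)%N r else 0.
Proof.
move=> r0; rewrite /pivot mmul_X1pow r0 leqn0; case: eqP => // _.
by congr K; rewrite -[RHS]mk_mhead_behead r0.
Qed.

Lemma expansion_mod_X1 H r : mhead r = 0%N ->
  H r = \sum_(rho < a) coord_mod_X1 H rho * K rho r.
Proof.
move=> r0; rewrite [LHS]greedy_expansion r0 muln1.
rewrite (partition_big (fun m : 'I_(emax + a) => Ordinal (ltn_pmod m a_gt0)) xpredT) //=.
apply: eq_bigr => rho _; rewrite /coord_mod_X1 mulr_suml big_mkcondr /=.
apply: eq_big => [m|m /eqP <-]; first by rewrite -val_eqE.
by rewrite pivot_mod_X1 //; case: eqP; rewrite ?mulr0.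
Qed.

Lemma span_mod_X1_absurd : False.
Proof.
pose Hv (l : 'I_a.+1) : mser C := fun r => if r == midx_var l then 1 else 0.
pose P := \matrix_(l < a.+1, rho < a) coord_mod_X1 (Hv l) rho.
pose E := \matrix_(rho < a, j < a.+1) K rho (midx_var j).
suff /mulmx1_min : P *m E = 1%:M by rewrite ltnn.
apply/matrixP => l j; rewrite !mxE.
under eq_bigr do rewrite !mxE.
rewrite -(expansion_mod_X1 (Hv l) (mhead_midx_var j)) /Hv (inj_eq midx_var_inj).
by rewrite eq_sym -val_eqE; case: eqP.
Qed.

End Reduction.
End Embedding.

Lemma no_injective_alg_hom (C : fieldType) :
  ~ exists phi : mser C -> ser C, is_alg_hom phi /\ injective phi.
Proof.
move=> [phi [[phiD phiZ phiM] phi_inj]].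
have [a a_gt0 X1a] := phi_X1_order phiD phiZ phiM phi_inj.
have [K [e K_min]] := min_order_reps phi a.
exact: (span_mod_X1_absurd phiD phiZ phiM phi_inj a_gt0 X1a K_min).
Qed.

Local Open Scope complex_scope.

Theorem theorem1p1 (R : realType) :
  ~ exists phi : mser R[i] -> ser R[i], is_alg_hom phi /\ injective phi.
Proof. exact: no_injective_alg_hom. Qed.
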